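(* Let $k$ be a field and $f:R\to S$ a homomorphism of commutative $k$-algebras which maps an ideal $I$ of $R$ isomorphically onto an ideal of $S$ (also denoted $I$). Let $HH_0(R,S,I)$ denote the cokernel of the induced map $HH_1(R,I)\to HH_1(S,I)$. Then the map $S\otimes I+I\otimes S\to I\otimes_S\Omega_{S/R}$ given by $x\otimes r\mapsto x\otimes dr$ and $r\otimes x\mapsto -x\otimes dr$ ($x\in I$, $r\in S$) induces isomorphisms of $R$-modules $$HH_0(R,S,I)\cong I\otimes_S\Omega_{S/R}\cong(I/I^2)\otimes_{S/I}\Omega_{(S/I)/(R/I)}.$$
   Context: Tensor products without subscript are over $k$. For a commutative $k$-algebra $T$ and ideal $I$, $HH_1(T,I)$ is the quotient of $T\otimes I+I\otimes T\subseteq T\otimes T$ by the image of $T\otimes T\otimes I+T\otimes I\otimes T+I\otimes T\otimes T$ under $b(x\otimes y\otimes z)=xy\otimes z-x\otimes yz+zx\otimes y$; $f$ induces $HH_1(R,I)\to HH_1(S,I)$. $\Omega_{S/R}$ is the module of Kähler differentials of $S$ relative to $R$. *)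

From HB Require Import structures.
From mathcomp Require Import all_boot all_order all_algebra.
From mathcomp Require Import freeg.

Set Implicit Arguments.
Unset Strict Implicit.
Unset Printing Implicit Defensive.

Import Order.TTheory GRing.Theory Num.Theory.
Local Open Scope ring_scope.

Definition zspan (M : zmodType) (X : M -> Prop) (m : M) : Prop :=
  exists l : seq (M * int),
    (forall p, p \in l -> X p.1) /\ m = \sum_(p <- l) p.1 *~ p.2.

Definition sum3 (M : zmodType) (X Y Z : M -> Prop) (m : M) : Prop :=
  exists a b c, X a /\ Y b /\ Z c /\ m = a + b + c.

Definition lspan (A : pzRingType) (V : lmodType A) (X : V -> Prop) (v : V) : Prop :=
  exists l : seq (V * A),
    (forall p, p \in l -> X p.1) /\ v = \sum_(p <- l) p.2 *: p.1.

Definition fgen (K : choiceType) (x : K) : {freeg K / int} := << x >>.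

Definition fgext (K : choiceType) (M : zmodType) (g : K -> M)
  (u : {freeg K / int}) : M :=
  \sum_(x <- dom u) g x *~ coeff x u.

Definition gens_in (K : choiceType) (P : K -> Prop) (u : {freeg K / int}) :=
  forall x, x \in dom u -> P x.

(* Tensor product over A of the subquotient modules PV/NV and PW/NW    *)
(* (PV a submodule of the A-module V, NV a submodule of PV; similarly  *)
(* for W).  Its elements are represented by formal Z-linear            *)
(* combinations of pairs (v,w) with v in PV, w in PW (generators       *)
(* v (x) w), and two formal sums represent the same element iff their  *)
(* difference lies in the subgroup generated by the defining relations *)
(* of the tensor product (biadditivity, A-balancedness) together with  *)
(* n (x) w = 0 and v (x) n = 0 for n in NV resp. NW.                   *)
Definition tens_rel (A : pzRingType) (V W : lmodType A)
  (PV NV : V -> Prop) (PW NW : W -> Prop) : {freeg (V * W) / int} -> Prop :=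
  zspan (fun t =>
     (exists v v' w, [/\ PV v, PV v', PW w &
         t = fgen (v + v', w) - fgen (v, w) - fgen (v', w)])
  \/ (exists v w w', [/\ PV v, PW w, PW w' &
         t = fgen (v, w + w') - fgen (v, w) - fgen (v, w')])
  \/ (exists a v w, [/\ PV v, PW w &
         t = fgen (a *: v, w) - fgen (v, a *: w)])
  \/ (exists n w, [/\ PV n, NV n, PW w & t = fgen (n, w)])
  \/ (exists v n, [/\ PV v, PW n, NW n & t = fgen (v, n)])).

Definition is_ideal (T : comPzRingType) (I : T -> Prop) : Prop :=
  [/\ I 0, (forall x y, I x -> I y -> I (x + y)) &
      (forall t x, I x -> I (t * x))].

Section HH.
Variables (k : fieldType) (T : comAlgType k) (I : T -> Prop).

(* T (x)_k T, elements = formal sums of pairs modulo tens_rel.         *)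
Definition TT_rel : {freeg (T * T) / int} -> Prop :=
  tens_rel (V := T) (W := T) (fun _ => True) (fun _ => False)
           (fun _ => True) (fun _ => False).

(* Formal sums representing elements of T(x)I + I(x)T in T(x)T.        *)
Definition HHcycles (u : {freeg (T * T) / int}) : Prop :=
  exists v, zspan (fun t => exists x r, I x /\
                      (t = fgen (x, r) \/ t = fgen (r, x))) v
            /\ TT_rel (u - v).

(* Image under b of T(x)T(x)I + T(x)I(x)T + I(x)T(x)T, where
   b(x(x)y(x)z) = xy(x)z - x(x)yz + zx(x)y.                              *)
Definition HHbound : {freeg (T * T) / int} -> Prop :=
  zspan (fun t => exists x y z, (I x \/ I y \/ I z) /\
     t = fgen (x * y, z) - fgen (x, y * z) + fgen (z * x, y)).

(* HH_1(T,I) = HHcycles modulo (TT_rel + HHbound).                     *)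
End HH.

Definition tmap (R S : choiceType) (f : R -> S) (u : {freeg (R * R) / int})
  : {freeg (S * S) / int} :=
  fgext (fun p => fgen (f p.1, f p.2)) u.

(* Kaehler differentials Omega_{S/R} (R-algebra structure via f): the
   free S-module on symbols ds (s in S), i.e. {freeg S / S}, modulo the
   S-submodule generated by d(s+t)-ds-dt, d(st)-s dt-t ds, d(f a).     *)
Definition dsym (S : comNzRingType) (s : S) : {freeg S / S} := << s >>.

Definition Omega_rel (S : comNzRingType) (Rim : S -> Prop)
  : {freeg S / S} -> Prop :=
  lspan (fun w =>
     (exists s t, w = dsym (s + t) - dsym s - dsym t)
  \/ (exists s t, w = dsym (s * t) - s *: dsym t - t *: dsym s)
  \/ (exists s, Rim s /\ w = dsym s)).

(* Omega_{(S/J)/(R/I)}, with S/J-objects represented by elements of S: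
   the free S/J-module on symbols d(s mod J) is {freeg S / S} modulo
   coefficients in J and the identifications d(s) = d(s+y), y in J;
   then modulo the Kaehler relations (R/I acting through the image of f). *)
Definition Omega_quot_rel (S : comNzRingType) (Rim J : S -> Prop)
  : {freeg S / S} -> Prop :=
  lspan (fun w =>
     (exists y s, J y /\ w = y *: dsym s)
  \/ (exists y s, J y /\ w = dsym (s + y) - dsym s)
  \/ (exists s t, w = dsym (s + t) - dsym s - dsym t)
  \/ (exists s t, w = dsym (s * t) - s *: dsym t - t *: dsym s)
  \/ (exists s, Rim s /\ w = dsym s)).

Definition ideal_sq (S : comNzRingType) (J : S -> Prop) : S -> Prop :=
  zspan (fun s => exists y z, J y /\ J z /\ s = y * z).

(* The map  S(x)I + I(x)S --> I (x)_S Omega_{S/R},                      *)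
(*   x(x)r |-> x(x)dr,   r(x)x |-> -x(x)dr   (x in I, r in S),          *)
(* defined on formal sums of tagged generators: (true,(x,r)) stands for *)
(* the generator x(x)r with x in I, (false,(r,x)) for r(x)x with x in I. *)
Section TheMap.
Variables (S : comNzRingType) (J : S -> Prop).

Definition tagged_valid (d : {freeg (bool * (S * S)) / int}) : Prop :=
  gens_in (fun g : bool * (S * S) => if g.1 then J g.2.1 else J g.2.2) d.

Definition tag_incl (d : {freeg (bool * (S * S)) / int}) : {freeg (S * S) / int} :=
  fgext (fun g : bool * (S * S) => fgen g.2) d.

Definition tag_phi (d : {freeg (bool * (S * S)) / int})
  : {freeg (S^o * {freeg S / S}) / int} :=
  fgext (fun g : bool * (S * S) =>
           if g.1 then fgen ((g.2.1 : S^o), dsym g.2.2)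
           else - fgen ((g.2.2 : S^o), dsym g.2.1)) d.

Definition tag_act (s : S) (d : {freeg (bool * (S * S)) / int}) :=
  fgext (fun g : bool * (S * S) => fgen (g.1, (s * g.2.1, g.2.2))) d.

Definition tens_act (s : S) (t : {freeg (S^o * {freeg S / S}) / int}) :=
  fgext (fun p : S^o * {freeg S / S} => fgen ((s * p.1 : S^o), p.2)) t.
End TheMap.

(* Choose, by Zorn's lemma, a k-linear retraction p of S onto I.  Then
   psi (u (x) v) := p u (x) dv - p v (x) du extends the map to all of S (x) S; it is
   k-bilinear and antisymmetric, so its composite with the Hochschild boundary is
   cyclically symmetric and vanishes, as one may assume the first entry lies in I, where
   d and the S-action on Omega are killed by I.  It also vanishes on the image of R (x) R,
   since d kills f(R); hence the map descends to HH_0(R,S,I).  Conversely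
   theta (x (x) sum_s c_s ds) := sum_s x c_s (x) s inverts it modulo the same relations:
   theta turns the Leibniz rule into a Hochschild boundary and d(f a) into the image of
   HH_1(R,I), while r (x) x + x (x) r is the boundary of 1 (x) r (x) x plus 1 (x) rx with
   rx in I.  Finally, as I lies in the image of R, the relations of I (x)_S Omega_{S/R}
   already kill I^2 (x) Omega and I.Omega, so they are those of
   (I/I^2) (x)_{S/I} Omega_{(S/I)/(R/I)}. *)

From HB Require Import structures.
From mathcomp Require Import all_boot all_order all_algebra.
From mathcomp Require Import freeg.
From mathcomp Require boolp classical_sets.
Import GRing.Theory.
Local Open Scope ring_scope.

Set Implicit Arguments.
Unset Strict Implicit.
Unset Printing Implicit Defensive.

#[warning="-postfix-notation-not-level-1"]
Reserved Notation "a ≡ b %[mod Q ]" (at level 70, b at next level,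
  format "'[hv ' a '/'  ≡  b '/'  %[mod  Q ] ']'").

Definition subgroup (M : zmodType) (Q : M -> Prop) :=
  Q 0 /\ forall a b, Q a -> Q b -> Q (a - b).

Notation "a ≡ b %[mod Q ]" := (Q (a - b)) : ring_scope.

Section Subgroup.
Variables (M : zmodType) (Q : M -> Prop).
Hypothesis subQ : subgroup Q.

Lemma subgroup0 : Q 0. Proof. by case: subQ. Qed.

Lemma subgroupB a b : Q a -> Q b -> Q (a - b). Proof. by case: subQ => _; apply. Qed.

Lemma subgroupN a : Q a -> Q (- a).
Proof. by move=> Qa; rewrite -sub0r; apply: subgroupB => //; apply: subgroup0. Qed.

Lemma subgroupD a b : Q a -> Q b -> Q (a + b).
Proof. by move=> Qa Qb; rewrite -[b]opprK; apply/subgroupB/subgroupN. Qed.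

Lemma subgroupMz a (n : int) : Q a -> Q (a *~ n).
Proof.
have QMn m : Q a -> Q (a *+ m).
  by move=> Qa; elim: m => [|m IH]; [exact: subgroup0 | rewrite mulrS; exact: subgroupD].
by case: n => n Qa; [exact: QMn | rewrite NegzE mulrNz; exact/subgroupN/QMn].
Qed.

Lemma subgroup_sum (T : Type) (r : seq T) (P : pred T) (F : T -> M) :
  (forall i, P i -> Q (F i)) -> Q (\sum_(i <- r | P i) F i).
Proof.
by move=> QF; elim/big_rec: _ => [|i x Pi Qx]; [exact: subgroup0 | exact: subgroupD (QF _ Pi) Qx].
Qed.

Lemma eqmod_eq a b : a = b -> a ≡ b %[mod Q].
Proof. by move=> ->; rewrite subrr; apply: subgroup0. Qed.

Lemma eqmod_sym a b : a ≡ b %[mod Q] -> b ≡ a %[mod Q].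
Proof. by move=> Qab; rewrite -opprB; apply: subgroupN. Qed.

Lemma eqmod_trans b a c : a ≡ b %[mod Q] -> b ≡ c %[mod Q] -> a ≡ c %[mod Q].
Proof. by move=> Qab Qbc; rewrite -[a](subrK b) -addrA; apply: subgroupD. Qed.

Lemma eqmodD a a' b b' :
  a ≡ a' %[mod Q] -> b ≡ b' %[mod Q] -> a + b ≡ a' + b' %[mod Q].
Proof. by move=> Qa Qb; rewrite opprD addrACA; apply: subgroupD. Qed.

Lemma eqmodN a a' : a ≡ a' %[mod Q] -> - a ≡ - a' %[mod Q].
Proof. by move=> Qa; rewrite -opprD; apply: subgroupN. Qed.

Lemma eqmodB a a' b b' :
  a ≡ a' %[mod Q] -> b ≡ b' %[mod Q] -> a - b ≡ a' - b' %[mod Q].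
Proof. by move=> Qa Qb; apply/eqmodD/eqmodN. Qed.

Lemma eqmod_subl a b c : a ≡ b + c %[mod Q] -> a - c ≡ b %[mod Q].
Proof. by rewrite -addrA -opprD [c + b]addrC. Qed.

Lemma eqmod_subr a b : Q b -> a - b ≡ a %[mod Q].
Proof. by move=> Qb; rewrite addrAC subrr sub0r; apply: subgroupN. Qed.

Lemma eqmod_mem a b : a ≡ b %[mod Q] -> Q b -> Q a.
Proof. by move=> Qab Qb; rewrite -[a](subrK b); apply: subgroupD. Qed.

Lemma eqmod_big_dom (K : choiceType) (A : pzRingType) (w : {freeg K / A})
    (F : K -> M) (L : seq K) :
  uniq L -> {subset dom w <= L} -> (forall s, s \notin dom w -> Q (F s)) ->
  \sum_(s <- L) F s ≡ \sum_(s <- dom w) F s %[mod Q].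
Proof.
move=> uL domL QF; rewrite (bigID (mem (dom w))) /= -addrA.
have -> : \sum_(s <- L | s \in dom w) F s = \sum_(s <- dom w) F s.
  rewrite -big_filter; apply/perm_big/uniq_perm; rewrite ?filter_uniq ?uniq_dom //.
  by move=> x; rewrite mem_filter andb_idr // => /domL.
by rewrite addrC addrNK; apply: subgroup_sum.
Qed.
End Subgroup.

Lemma subgroup_comp (M N : zmodType) (h : {additive M -> N}) (Q : N -> Prop) :
  subgroup Q -> subgroup (fun m => Q (h m)).
Proof.
move=> subQ; split=> [|a b Qa Qb]; rewrite ?raddf0 ?raddfB; first exact: (subgroup0 subQ).
exact: (subgroupB subQ).
Qed.

Lemma subgroup_image (M N : zmodType) (h : {additive M -> N}) (Q : M -> Prop) :
  subgroup Q -> subgroup (fun u => exists v, Q v /\ u = h v).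
Proof.
move=> subQ; split; first by exists 0; rewrite raddf0; split=> //; apply: (subgroup0 subQ).
move=> _ _ [v [Qv ->]] [v' [Qv' ->]]; exists (v - v'); rewrite raddfB; split=> //.
exact: (subgroupB subQ).
Qed.

Lemma subgroup_sum3 (M : zmodType) (X Y Z : M -> Prop) :
  subgroup X -> subgroup Y -> subgroup Z -> subgroup (sum3 X Y Z).
Proof.
move=> sX sY sZ; split.
  exists 0, 0, 0; split; first exact: (subgroup0 sX).
  split; first exact: (subgroup0 sY).
  split; first exact: (subgroup0 sZ).
  by rewrite 2!addr0.
move=> u v [a [b [c [Xa [Yb [Zc ->]]]]]] [a' [b' [c' [Xa' [Yb' [Zc' ->]]]]]].
exists (a - a'), (b - b'), (c - c').
split; first exact: (subgroupB sX Xa Xa').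
split; first exact: (subgroupB sY Yb Yb').
split; first exact: (subgroupB sZ Zc Zc').
by rewrite opprD addrACA opprD (addrACA a).
Qed.

Lemma zspan_subgroup (M : zmodType) (X : M -> Prop) : subgroup (zspan X).
Proof.
split; first by exists [::]; rewrite big_nil.
move=> _ _ [la [Xla ->]] [lb [Xlb ->]].
exists (la ++ [seq (p.1, - p.2) | p <- lb]); split.
  by move=> p; rewrite mem_cat => /orP[/Xla|/mapP[q /Xlb ? ->]].
by rewrite big_cat big_map -sumrN; congr (_ + _); apply: eq_bigr => p _; rewrite mulrNz.
Qed.

Lemma zspan_gen (M : zmodType) (X : M -> Prop) x : X x -> zspan X x.
Proof. by move=> Xx; exists [:: (x, 1%:Z)]; rewrite big_seq1; split=> // p /[!inE] /eqP->. Qed.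

Lemma zspan_min (M : zmodType) (X Q : M -> Prop) :
  subgroup Q -> (forall x, X x -> Q x) -> forall m, zspan X m -> Q m.
Proof.
move=> subQ XQ _ [l [Xl ->]]; rewrite big_seq.
by apply: (subgroup_sum subQ) => p /Xl /XQ; apply: (subgroupMz subQ).
Qed.

Lemma zspan_additive (M N : zmodType) (h : {additive M -> N}) (X : M -> Prop) (Q : N -> Prop) :
  subgroup Q -> (forall x, X x -> Q (h x)) -> forall m, zspan X m -> Q (h m).
Proof. by move=> subQ; apply: zspan_min; apply: subgroup_comp. Qed.

Section LinearSpan.
Variables (A : pzRingType) (V : lmodType A) (X : V -> Prop).

Lemma lspan0 : lspan X 0. Proof. by exists [::]; rewrite big_nil. Qed.

Lemma lspanD u v : lspan X u -> lspan X v -> lspan X (u + v).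
Proof.
move=> [lu [Xu ->]] [lv [Xv ->]]; exists (lu ++ lv); rewrite big_cat; split=> // p.
by rewrite mem_cat => /orP[/Xu|/Xv].
Qed.

Lemma lspanZ a u : lspan X u -> lspan X (a *: u).
Proof.
move=> [lu [Xu ->]]; exists [seq (p.1, a * p.2) | p <- lu]; split.
  by move=> p /mapP[q /Xu ? ->].
by rewrite big_map scaler_sumr; apply: eq_bigr => p _; rewrite scalerA.
Qed.

Lemma lspan_gen u : X u -> lspan X u.
Proof. by move=> Xu; exists [:: (u, 1)]; rewrite big_seq1 scale1r; split=> // p /[!inE] /eqP->. Qed.

Lemma lspan_subgroup : subgroup (lspan X).
Proof. by split=> [|u v Xu Xv]; [exact: lspan0 | rewrite -scaleN1r; apply/lspanD/lspanZ]. Qed.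

Lemma lspan_ind (P : V -> Prop) :
  P 0 -> (forall u v, P u -> P v -> P (u + v)) -> (forall a u, X u -> P (a *: u)) ->
  forall v, lspan X v -> P v.
Proof.
move=> P0 PD PZ _ [l [Xl ->]]; elim: l Xl => [|q l IH] Xl; first by rewrite big_nil.
rewrite big_cons; apply: PD; first by apply/PZ/Xl/mem_head.
by apply: IH => p pl; apply: Xl; rewrite inE pl orbT.
Qed.
End LinearSpan.

Lemma gens_in_subgroup (K : choiceType) (P : K -> Prop) : subgroup (gens_in P).
Proof.
split=> [x|a b Pa Pb x /domB]; first by rewrite dom0.
by rewrite mem_cat => /orP[/Pa|/Pb].
Qed.

Lemma gens_in_fgen (K : choiceType) (P : K -> Prop) x : P x -> gens_in P (fgen x).
Proof. by move=> Px y; rewrite /fgen domU1 inE => /eqP->. Qed.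

Lemma freegUZ (K : choiceType) (A : nzRingType) (c : A) (x : K) :
  << c *g x >> = c *: << x >>.
Proof. by apply/eqP/freeg_eqP => y; rewrite coeffZ !coeffU mul1r. Qed.

Section FreeExtension.
Variables (K : choiceType) (M : zmodType).
Implicit Types (g : K -> M) (u : {freeg K / int}).

Lemma fgext_seq g u (L : seq K) : uniq L -> {subset dom u <= L} ->
  fgext g u = \sum_(x <- L) g x *~ coeff x u.
Proof.
move=> uL domL; symmetry; rewrite (bigID (mem (dom u))) /= [X in _ + X]big1 ?addr0.
  rewrite -big_filter; apply/perm_big/uniq_perm; rewrite ?filter_uniq ?uniq_dom //.
  by move=> x; rewrite mem_filter andb_idr // => /domL.
by move=> x xu; rewrite coeff_outdom // mulrz0.
Qed.

Lemma fgext_is_zmod_morphism g : zmod_morphism (fgext g).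
Proof.
move=> u v; set L := undup (dom u ++ dom v).
have uL : uniq L by apply: undup_uniq.
have Lu : {subset dom u <= L} by move=> x xd; rewrite mem_undup mem_cat xd.
have Lv : {subset dom v <= L} by move=> x xd; rewrite mem_undup mem_cat xd orbT.
have Luv : {subset dom (u - v) <= L} by move=> x /domB; rewrite mem_undup.
rewrite (fgext_seq g uL Lu) (fgext_seq g uL Lv) (fgext_seq g uL Luv) -sumrB.
by apply: eq_bigr => x _; rewrite coeffB mulrzBr.
Qed.

HB.instance Definition _ g :=
  GRing.isZmodMorphism.Build {freeg K / int} M (fgext g) (fgext_is_zmod_morphism g).

Lemma fgext_fgen g x : fgext g (fgen x) = g x.
Proof. by rewrite /fgext /fgen domU1 big_seq1 coeffU eqxx mulr1. Qed.

Lemma fgextB g1 g2 u : fgext g1 u - fgext g2 u = fgext (fun x => g1 x - g2 x) u.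
Proof. by rewrite /fgext -sumrB; apply: eq_bigr => x _; rewrite mulrzBl. Qed.

Lemma fgext_comp (N : zmodType) (h : {additive M -> N}) g u :
  h (fgext g u) = fgext (fun x => h (g x)) u.
Proof. by rewrite /fgext raddf_sum; apply: eq_bigr => x _; rewrite raddfMz. Qed.

Lemma fgext_in (Q : M -> Prop) g u :
  subgroup Q -> (forall x, x \in dom u -> Q (g x)) -> Q (fgext g u).
Proof.
move=> subQ Qg; rewrite /fgext big_seq.
by apply: (subgroup_sum subQ) => x /Qg; apply: (subgroupMz subQ).
Qed.
End FreeExtension.

Lemma fgext_fgen_id (K : choiceType) (t : {freeg K / int}) : fgext (@fgen K) t = t.
Proof.
rewrite /fgext -[RHS]freeg_sumE; apply: eq_bigr => x _.
by rewrite /fgen freeg_mulz intz.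
Qed.

(** * Linear retractions *)

Section LinearRetraction.
Variables (k : fieldType) (V : lmodType k).

Definition subspace (X : V -> Prop) :=
  [/\ X 0, forall x y, X x -> X y -> X (x + y) & forall c x, X x -> X (c *: x)].

Variable J : V -> Prop.
Hypothesis subJ : subspace J.

Lemma complement_exists :
  exists A, [/\ subspace A, (forall x, A x -> J x -> x = 0)
              & forall v, exists2 j, J j & A (v - j)].
Proof.
have [J0 JD JZ] := subJ.
(* [P] does not ask for [C 0], since the union of the empty chain is empty. *)
pose P (C : V -> Prop) := [/\ forall x y, C x -> C y -> C (x + y),
  forall c x, C x -> C (c *: x) & forall x, C x -> J x -> x = 0].
have [A [[AD AZ AJ] Amax]] : exists A, P A /\ forall B, classical_sets.proper A B -> ~ P B.
  apply: classical_sets.Zorn_bigcup => F FP Ftot; split.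
  - move=> x y [X FX Xx] [Y FY Yy]; have [XY|YX] := Ftot X Y FX FY.
    + by exists Y => //; case: (FP Y FY) => YD _ _; apply: YD => //; apply: XY.
    + by exists X => //; case: (FP X FX) => XD _ _; apply: XD => //; apply: YX.
  - by move=> c x [X FX Xx]; exists X => //; case: (FP X FX) => _ XZ _; apply: XZ.
  - by move=> x [X FX Xx]; case: (FP X FX) => _ _; apply.
have A0 : A 0.
  apply: boolp.contrapT => nA0; apply: (Amax (fun x => A x \/ x = 0)).
    split=> [x Ax|]; first by left.
    by move=> sub; apply/nA0/(sub 0); right.
  split=> [x y [Ax|->] [Ay|->]|c x [Ax|->]|x [Ax|->] //].
  - by left; apply: AD.
  - by left; rewrite addr0.
  - by left; rewrite add0r.
  - by right; rewrite addr0.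
  - by left; apply: AZ.
  - by right; rewrite scaler0.
  - exact: AJ.
exists A; split=> // v; apply: boolp.contrapT => nv.
pose B x := exists a c, A a /\ x = a + c *: v.
apply: (Amax B); last split.
- split=> [x Ax|]; first by exists x, 0; rewrite scale0r addr0.
  move=> BA; apply: nv; exists 0 => //; rewrite subr0; apply: BA.
  by exists 0, 1; rewrite add0r scale1r.
- move=> _ _ [a [c [Aa ->]]] [b [d [Ab ->]]].
  by exists (a + b), (c + d); rewrite scalerDl addrACA; split=> //; apply: AD.
- move=> e _ [a [c [Aa ->]]].
  by exists (e *: a), (e * c); rewrite scalerDr scalerA; split=> //; apply: AZ.
- move=> _ [a [c [Aa ->]]] Jx; have [c0|c0] := eqVneq c 0.
    by move: Jx; rewrite c0 scale0r !addr0; apply: AJ.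
  (* otherwise [c^-1 (a + c v)] would be a [J]-component of [v] *)
  exfalso; apply: nv; exists (c^-1 *: (a + c *: v)); first exact: JZ.
  rewrite scalerDr scalerA mulVf // (scale1r v) opprD addrCA subrr addr0.
  by rewrite -scaleNr; apply: AZ.
Qed.

Lemma linear_retraction_exists :
  exists p : V -> V, [/\ forall v, J (p v), forall u v, p (u + v) = p u + p v,
     forall c v, p (c *: v) = c *: p v & forall x, J x -> p x = x].
Proof.
have [J0 JD JZ] := subJ.
have [A [[A0 AD AZ] AJ dec]] := complement_exists.
have AB x y : A x -> A y -> A (x - y) by move=> Ax Ay; apply: AD; rewrite // -scaleN1r; apply: AZ.
have decU v j j' : J j -> A (v - j) -> J j' -> A (v - j') -> j = j'.
  move=> Jj Aj Jj' Aj'; apply/eqP; rewrite -subr_eq0; apply/eqP; apply: AJ.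
    have -> : j - j' = (v - j') - (v - j) by rewrite opprB [RHS]addrC addrA subrK.
    exact: AB.
  by rewrite -scaleN1r; apply: JD => //; apply: JZ.
pose p v := boolp.cid2 (dec v).
exists (fun v => sval (p v)); split.
- by move=> v; case: (p v).
- move=> u v; case: (p u) => /= ju Jju Aju; case: (p v) => /= jv Jjv Ajv.
  case: (p (u + v)) => /= j Jj Aj; apply: (decU (u + v)) => //; first exact: JD.
  by rewrite opprD addrACA; apply: AD.
- move=> c v; case: (p v) => /= j Jj Aj; case: (p (c *: v)) => /= j' Jj' Aj'.
  by apply: (decU (c *: v)) => //; [apply: JZ | rewrite -scalerBr; apply: AZ].
- move=> x Jx; case: (p x) => /= j Jj Aj.
  by apply: (decU x) => //; rewrite subrr.
Qed.
End LinearRetraction.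

(** * The tensor product of an ideal with the differentials *)

Section IdealTensorDifferentials.
Context {S : comNzRingType} {J Rim : S -> Prop}.
Hypotheses (idealJ : is_ideal J) (J_Rim : forall x, J x -> Rim x).

Local Notation W := {freeg S / S}.
Local Notation ds := (@dsym S).
Local Notation Om := (Omega_rel Rim).
Local Notation Tr :=
  (tens_rel (V := S^o) (W := W) J (fun _ => False) (fun _ => True) Om).
Local Notation "x ⊗ w" := (fgen ((x : S^o), (w : W))) (at level 40).

Lemma idealD x y : J x -> J y -> J (x + y). Proof. by case: idealJ => _ + _; apply. Qed.
Lemma idealM t x : J x -> J (t * x). Proof. by case: idealJ => _ _; apply. Qed.
Lemma idealMr t x : J x -> J (x * t). Proof. by rewrite mulrC; apply: idealM. Qed.

Lemma Omega_subgroup : subgroup Om. Proof. exact: lspan_subgroup. Qed.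

Let OmG := Omega_subgroup.

Lemma Omega_dD s t : Om (ds (s + t) - ds s - ds t).
Proof. by apply: lspan_gen; left; exists s, t. Qed.

Lemma Omega_dM s t : Om (ds (s * t) - s *: ds t - t *: ds s).
Proof. by apply: lspan_gen; right; left; exists s, t. Qed.

Lemma Omega_dRim s : Rim s -> Om (ds s).
Proof. by move=> Rs; apply: lspan_gen; right; right; exists s. Qed.

Lemma Omega_scale_dRim a s : Rim a -> a *: ds s ≡ ds (a * s) %[mod Om].
Proof.
move=> Ra; have -> : a *: ds s - ds (a * s) =
    - (ds (a * s) - a *: ds s - s *: ds a) - s *: ds a.
  by rewrite opprB opprB [X in X - _]addrC addrK.
by apply: (subgroupB OmG); [apply/(subgroupN OmG)/Omega_dM | apply/lspanZ/Omega_dRim].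
Qed.

(* [z ds = d(zs) - s dz], and both [z] and [zs] lie in [J], hence in [Rim]. *)
Lemma Omega_ideal_scale z w : J z -> Om (z *: w).
Proof.
move=> Jz; rewrite -[w]freeg_sumE scaler_sumr; apply: (subgroup_sum OmG) => i _.
rewrite freegUZ scalerA -[X in Om X](subrK (ds (z * coeff i w * i))).
apply: (subgroupD OmG); last exact/Omega_dRim/J_Rim/idealMr/idealMr.
exact/Omega_scale_dRim/J_Rim/idealMr.
Qed.

Lemma tens_rel_subgroup : subgroup Tr. Proof. exact: zspan_subgroup. Qed.

Let TrG := tens_rel_subgroup.

Lemma tensDl x x' w : J x -> J x' -> (x + x') ⊗ w ≡ x ⊗ w + x' ⊗ w %[mod Tr].
Proof. by move=> Jx Jx'; rewrite opprD addrA; apply: zspan_gen; left; exists x, x', w. Qed.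

Lemma tensDr x w w' : J x -> x ⊗ (w + w') ≡ x ⊗ w + x ⊗ w' %[mod Tr].
Proof. by move=> Jx; rewrite opprD addrA; apply: zspan_gen; right; left; exists x, w, w'. Qed.

Lemma tensZ a x w : J x -> (a * x) ⊗ w ≡ x ⊗ (a *: w) %[mod Tr].
Proof. by move=> Jx; apply: zspan_gen; right; right; left; exists a, x, w. Qed.

Lemma tens_Omega x n : J x -> Om n -> Tr (x ⊗ n).
Proof. by move=> Jx On; apply: zspan_gen; right; right; right; right; exists x, n. Qed.

Lemma tens_eqmodr x w w' : J x -> w ≡ w' %[mod Om] -> x ⊗ w ≡ x ⊗ w' %[mod Tr].
Proof.
move=> Jx Oww'; rewrite -{1}[w](subrK w'); apply: (eqmod_trans TrG (tensDr _ _ Jx)).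
by rewrite addrK; apply: tens_Omega.
Qed.

Lemma tens_dRim x r : J x -> Rim r -> Tr (x ⊗ ds r).
Proof. by move=> Jx Rr; apply/tens_Omega/Omega_dRim. Qed.

Lemma tens_idealM x y w : J x -> J y -> Tr ((x * y) ⊗ w).
Proof.
move=> Jx Jy; apply: (eqmod_mem TrG (tensZ _ _ Jy)).
by apply/tens_Omega/Omega_ideal_scale.
Qed.

Lemma tens_dD x s t : J x -> x ⊗ ds (s + t) ≡ x ⊗ ds s + x ⊗ ds t %[mod Tr].
Proof.
move=> Jx; apply: (eqmod_trans TrG _ (tensDr _ _ Jx)).
by apply: tens_eqmodr; rewrite // opprD addrA; apply: Omega_dD.
Qed.

Lemma tens_dM x u v : J x -> x ⊗ ds (u * v) ≡ (x * u) ⊗ ds v + (x * v) ⊗ ds u %[mod Tr].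
Proof.
move=> Jx; apply: (eqmod_trans TrG (b := x ⊗ (u *: ds v + v *: ds u))).
  by apply: tens_eqmodr; rewrite // opprD addrA; apply: Omega_dM.
apply: (eqmod_trans TrG (tensDr _ _ Jx)).
by apply: (eqmodD TrG); apply: (eqmod_sym TrG); rewrite mulrC; apply: tensZ.
Qed.

Lemma tens_dRimM a y s : Rim a -> J y -> (a * y) ⊗ ds s ≡ y ⊗ ds (a * s) %[mod Tr].
Proof.
move=> Ra Jy; apply: (eqmod_trans TrG (tensZ _ _ Jy)).
by apply: tens_eqmodr => //; apply: Omega_scale_dRim.
Qed.

Lemma tens_sum x (T : Type) (r : seq T) (F : T -> W) :
  J x -> x ⊗ (\sum_(i <- r) F i) ≡ \sum_(i <- r) x ⊗ F i %[mod Tr].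
Proof.
move=> Jx; elim: r => [|i r IH]; first by rewrite !big_nil subr0; apply/tens_Omega/lspan0.
rewrite !big_cons; apply: (eqmod_trans TrG (tensDr _ _ Jx)).
by apply: (eqmodD TrG) => //; apply: (eqmod_eq TrG).
Qed.

(* Every [x ⊗ w] is a sum of [(x c_s) ⊗ ds], the images of the generators [(x c_s, s)]. *)
Lemma tag_phi_surjective t : gens_in (fun p : S^o * W => J p.1) t ->
  exists d, tagged_valid J d /\ Tr (tag_phi d - t).
Proof.
move=> Jt; pose dq (q : S^o * W) : {freeg (bool * (S * S)) / int} :=
  \sum_(s <- dom q.2) fgen (true, ((q.1 : S) * coeff s q.2, s)).
exists (fgext dq t); split.
  rewrite /tagged_valid; apply: (fgext_in (gens_in_subgroup _)) => -[x w] xt; have /= Jx := Jt _ xt.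
  by apply: (subgroup_sum (gens_in_subgroup _)) => s _; apply: gens_in_fgen; apply: idealMr.
rewrite /tag_phi fgext_comp -{2}[t]fgext_fgen_id fgextB.
apply: (fgext_in TrG) => -[x w] xt; have /= Jx := Jt _ xt; rewrite /dq raddf_sum.
apply: (eqmod_sym TrG); rewrite -[X in _ ⊗ X]freeg_sumE.
apply: (eqmod_trans TrG (tens_sum _ _ Jx)); rewrite -sumrB.
apply: (subgroup_sum TrG) => s _; rewrite /= fgext_fgen /= freegUZ mulrC.
exact/(eqmod_sym TrG)/tensZ.
Qed.

Lemma tag_phi_act r d : Rim r -> tagged_valid J d ->
  Tr (tag_phi (tag_act r d) - tens_act r (tag_phi d)).
Proof.
move=> Rr Jd; rewrite /tag_act /tag_phi (fgext_comp (fgext _)).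
rewrite /tens_act (fgext_comp (fgext _)) fgextB.
apply: (fgext_in TrG) => -[b [x s]] xd; have /= Js := Jd _ xd.
case: b {xd} Js => /= Js; rewrite !fgext_fgen /=.
  by rewrite subrr; apply: (subgroup0 TrG).
rewrite raddfN /= fgext_fgen; apply: (eqmodN TrG).
by rewrite /=; apply: (eqmod_sym TrG); apply: tens_dRimM.
Qed.

Lemma tens_ideal_sq n w : ideal_sq J n -> Tr (n ⊗ w).
Proof.
suff sub : subgroup (fun n => J n /\ Tr (n ⊗ w)).
  move=> Jn; suff [] : J n /\ Tr (n ⊗ w) by [].
  apply: (zspan_min sub) Jn => _ [y [z [Jy [Jz ->]]]].
  by split; [apply: idealMr | apply: tens_idealM].
have [J0 _ _] := idealJ.
have tens0 : Tr (0 ⊗ w).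
  have := tensDl w J0 J0; rewrite addr0 opprD addrA subrr sub0r.
  by move=> /(subgroupN TrG); rewrite opprK.
split=> // a b [Ja Ta] [Jb Tb].
have Jab : J (a - b) by rewrite -mulN1r; apply: idealD => //; apply: idealM.
split=> //; have := tensDl w Jab Jb; rewrite subrK => /eqmod_subl Hab.
exact: (eqmod_mem TrG (eqmod_sym TrG Hab) (subgroupB TrG Ta Tb)).
Qed.

Lemma Omega_quot_relE n : Omega_quot_rel Rim J n <-> Om n.
Proof.
split; apply: lspan_ind => [|u v|a u]; try exact: lspan0; try exact: lspanD.
  move=> [[y [s [Jy ->]]]|[[y [s [Jy ->]]]|[[s [t ->]]|[[s [t ->]]|[s [Rs ->]]]]]]; apply: lspanZ.
  - exact: Omega_ideal_scale.
  - rewrite -(subrK (ds y) (ds (s + y) - ds s)); apply: lspanD; first exact: Omega_dD.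
    exact/Omega_dRim/J_Rim.
  - exact: Omega_dD.
  - exact: Omega_dM.
  - exact: Omega_dRim.
by move=> Xu; apply/lspanZ/lspan_gen; right; right.
Qed.

Lemma tens_rel_ideal_quot t :
  Tr t <-> tens_rel (V := S^o) (W := W) J (ideal_sq J) (fun _ => True)
                    (Omega_quot_rel Rim J) t.
Proof.
split; [apply: (zspan_min (zspan_subgroup _)) | apply: (zspan_min TrG)].
  move=> u [?|[?|[?|[[n [w [_ [] _ _]]]|[v [n [Jv _ On ->]]]]]]]; apply: zspan_gen.
  - by left.
  - by right; left.
  - by right; right; left.
  - by right; right; right; right; exists v, n; split=> //; apply/Omega_quot_relE.
move=> u [?|[?|[?|[[n [w [Jn Sn _ ->]]]|[v [n [Jv _ On ->]]]]]]].
- by apply: zspan_gen; left.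
- by apply: zspan_gen; right; left.
- by apply: zspan_gen; right; right; left.
- exact: tens_ideal_sq.
- by apply: tens_Omega => //; apply/Omega_quot_relE.
Qed.
End IdealTensorDifferentials.

(** * Comparison with Hochschild homology *)

Lemma HHcycles_subgroup (k : fieldType) (T : comAlgType k) (I : T -> Prop) :
  subgroup (HHcycles I).
Proof.
have Zsub := zspan_subgroup (fun t => exists x r, I x /\ (t = fgen (x, r) \/ t = fgen (r, x))).
split; first by exists 0; rewrite subrr; split; apply: (subgroup0 (zspan_subgroup _)).
move=> u v [a [Za Ta]] [b [Zb Tb]]; exists (a - b); split; first exact: (subgroupB Zsub).
exact: (eqmodB (zspan_subgroup _)).
Qed.

Section HochschildComparison.
Variables (k : fieldType) (R S : comAlgType k) (f : {lrmorphism R -> S}) (I : R -> Prop).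

Local Notation J := (fun s : S => exists a, I a /\ s = f a).
Local Notation Rim := (fun s : S => exists a, s = f a).
Hypothesis idealJ : is_ideal J.

Local Notation W := {freeg S / S}.
Local Notation ds := (@dsym S).
Local Notation Om := (Omega_rel Rim).
Local Notation Tr :=
  (tens_rel (V := S^o) (W := W) J (fun _ => False) (fun _ => True) Om).
Local Notation "x ⊗ w" := (fgen ((x : S^o), (w : W))) (at level 40).
Local Notation TT := (@TT_rel k S).
Local Notation K :=
  (sum3 TT (HHbound J) (fun u => exists v, HHcycles I v /\ u = tmap f v)).

Lemma J_Rim x : J x -> Rim x. Proof. by case=> a [_ ->]; exists a. Qed.

Let TrG := @tens_rel_subgroup S J Rim.

Section Retraction.
Variable p : S -> S.
Hypotheses (pJ : forall v, J (p v)) (pD : forall u v, p (u + v) = p u + p v)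
  (pZ : forall (c : k) v, p (c *: v) = c *: p v) (pJid : forall x, J x -> p x = x).

Definition psi (uv : S * S) := p uv.1 ⊗ ds uv.2 - p uv.2 ⊗ ds uv.1.

Lemma psiC u v : psi (u, v) = - psi (v, u). Proof. by rewrite /psi opprB. Qed.

Lemma psi_idealL u v : J u -> psi (u, v) ≡ u ⊗ ds v %[mod Tr].
Proof. by move=> Ju; rewrite /psi pJid //; apply/(eqmod_subr TrG)/tens_dRim/J_Rim. Qed.

Lemma psiDl v v' w : psi (v + v', w) ≡ psi (v, w) + psi (v', w) %[mod Tr].
Proof.
rewrite /psi /= pD; apply: (eqmod_trans TrG (eqmodB TrG (tensDl _ (pJ v) (pJ v'))
  (tens_dD _ _ (pJ w)))).
by apply: (eqmod_eq TrG); rewrite opprD addrACA.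
Qed.

Lemma psiDr v w w' : psi (v, w + w') ≡ psi (v, w) + psi (v, w') %[mod Tr].
Proof.
by move: (eqmodN TrG (psiDl w w' v)); rewrite (opprD (psi (w, v))) -!psiC.
Qed.

Lemma psiZ (c : k) v w : psi (c *: v, w) ≡ psi (v, c *: w) %[mod Tr].
Proof.
have Rc : Rim c%:A by exists c%:A; rewrite rmorph_alg.
rewrite /psi /= !pZ -(mulr_algl c (p v)) -(mulr_algl c (p w)) -(mulr_algl c v).
rewrite -(mulr_algl c w); apply: (eqmodB TrG); first exact: tens_dRimM.
exact/(eqmod_sym TrG)/tens_dRimM.
Qed.

Lemma psi_TT u : TT u -> Tr (fgext psi u).
Proof.
apply: (zspan_additive (h := fgext psi) TrG) => _
  [[v [v' [w [_ _ _ ->]]]]|[[v [w [w' [_ _ _ ->]]]]|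
   [[c [v [w [_ _ ->]]]]|[[n [w [_ [] _ _]]]|[v [n [_ _ []]]]]]]].
- by rewrite !raddfB /= !fgext_fgen -addrA -opprD; apply: psiDl.
- by rewrite !raddfB /= !fgext_fgen -addrA -opprD; apply: psiDr.
- by rewrite raddfB /= !fgext_fgen; apply: psiZ.
Qed.

(* By antisymmetry of [psi] its composite with the Hochschild boundary is cyclically
   symmetric, so it suffices to treat the case where the first entry lies in [J]. *)
Lemma psi_boundary_cyclic x y z : J x ->
  Tr (psi (x * y, z) + psi (y * z, x) + psi (z * x, y)).
Proof.
move=> Jx; have JM t : J (x * t) by apply: (idealMr idealJ).
apply: (eqmod_mem TrG
  (b := (x * y) ⊗ ds z - ((x * y) ⊗ ds z + (x * z) ⊗ ds y) + (x * z) ⊗ ds y)).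
  apply: (eqmodD TrG); last by rewrite [z * x]mulrC; apply: psi_idealL.
  apply: (eqmodD TrG); first exact: psi_idealL.
  rewrite psiC; apply: (eqmodN TrG); apply: (eqmod_trans TrG (psi_idealL _ Jx)).
  exact: tens_dM.
rewrite opprD addrA subrr sub0r addNr; exact: (subgroup0 TrG).
Qed.

Lemma psi_HHbound u : HHbound J u -> Tr (fgext psi u).
Proof.
apply: (zspan_additive (h := fgext psi) TrG) => _ [x [y [z [Jxyz ->]]]].
rewrite raddfD raddfB /= !fgext_fgen [psi (x, _)]psiC opprK.
case: Jxyz => [Jx|[Jy|Jz]]; first exact: psi_boundary_cyclic.
  by rewrite -addrA addrC; apply: psi_boundary_cyclic.
by rewrite addrC addrA; apply: psi_boundary_cyclic.
Qed.

Lemma psi_tmap v : Tr (fgext psi (tmap f v)).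
Proof.
rewrite /tmap (fgext_comp (fgext _)); apply: (fgext_in TrG) => uv _.
by rewrite /= fgext_fgen; apply: (subgroupB TrG); apply: tens_dRim; rewrite ?pJ //; eexists.
Qed.

Lemma tag_phi_well_defined_of_retraction d :
  tagged_valid J d -> K (tag_incl d) -> Tr (tag_phi d).
Proof.
move=> Jd [a [b [_ [TTa [HHb [[v [_ ->]] Ed]]]]]].
have psiK : Tr (fgext psi (tag_incl d)).
  rewrite Ed !raddfD; apply: (subgroupD TrG); last exact: psi_tmap.
  by apply: (subgroupD TrG); [apply: psi_TT | apply: psi_HHbound].
apply: (eqmod_mem TrG _ psiK); rewrite /tag_incl (fgext_comp (fgext psi)) /tag_phi fgextB.
apply: (fgext_in TrG) => -[b' [x r]] xd; have /= Jg := Jd _ xd.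
case: b' {xd} Jg => /= Jg; rewrite fgext_fgen.
  by apply: (eqmod_sym TrG); apply: psi_idealL.
by rewrite psiC; apply: (eqmodN TrG); apply: (eqmod_sym TrG); apply: psi_idealL.
Qed.
End Retraction.

Lemma ideal_subspace : subspace J.
Proof.
have [J0 JD JM] := idealJ; split=> // c x Jx.
by rewrite -mulr_algl; apply: JM.
Qed.

Lemma tag_phi_well_defined d : tagged_valid J d -> K (tag_incl d) -> Tr (tag_phi d).
Proof.
have [p [pJ pD pZ pJid]] := linear_retraction_exists ideal_subspace.
exact: tag_phi_well_defined_of_retraction.
Qed.

Let TTG : subgroup TT := zspan_subgroup _.

Let HHimG : subgroup (fun u => exists v, HHcycles I v /\ u = tmap f v) :=
  subgroup_image (fgext _) (HHcycles_subgroup I).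

Lemma K_subgroup : subgroup K.
Proof. exact: subgroup_sum3 TTG (zspan_subgroup _) HHimG. Qed.

Let KG := K_subgroup.

Lemma K_TT u : TT u -> K u.
Proof.
move=> TTu; exists u, 0, 0; split=> //; split; first exact: (subgroup0 (zspan_subgroup _)).
by split; [exact: (subgroup0 HHimG) | rewrite !addr0].
Qed.

Lemma K_boundary x y z : J x \/ J y \/ J z ->
  K (fgen (x * y, z) - fgen (x, y * z) + fgen (z * x, y)).
Proof.
move=> Jxyz; exists 0, (fgen (x * y, z) - fgen (x, y * z) + fgen (z * x, y)), 0.
split; first exact: (subgroup0 TTG); split; first by apply: zspan_gen; exists x, y, z.
by split; [exact: (subgroup0 HHimG) | rewrite addr0 add0r].
Qed.

Lemma K_image a c : I a \/ I c -> K (fgen (f a, f c)).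
Proof.
move=> Iac; exists 0, 0, (fgen (f a, f c)); split; first exact: (subgroup0 TTG).
split; first exact: (subgroup0 (zspan_subgroup _)); split; last by rewrite !add0r.
exists (fgen (a, c)); rewrite /tmap fgext_fgen; split=> //.
exists (fgen (a, c)); rewrite subrr; split; last exact: (subgroup0 (zspan_subgroup _)).
by apply: zspan_gen; case: Iac => Ia; [exists a, c | exists c, a]; split=> //; [left | right].
Qed.

Lemma TTDl (v v' w : S) : fgen (v + v', w) ≡ fgen (v, w) + fgen (v', w) %[mod TT].
Proof. by rewrite opprD addrA; apply: zspan_gen; left; exists v, v', w. Qed.

Lemma TTDr (v w w' : S) : fgen (v, w + w') ≡ fgen (v, w) + fgen (v, w') %[mod TT].
Proof. by rewrite opprD addrA; apply: zspan_gen; right; left; exists v, w, w'. Qed.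

Lemma TT0l (s : S) : TT (fgen (0, s)).
Proof.
by have := TTDl 0 0 s; rewrite addr0 opprD addrA subrr sub0r => /(subgroupN TTG); rewrite opprK.
Qed.

Definition theta (xw : S^o * W) : {freeg (S * S) / int} :=
  \sum_(s <- dom xw.2) fgen ((xw.1 : S) * coeff s xw.2, s).

Lemma theta_seq x w L : uniq L -> {subset dom w <= L} ->
  theta (x, w) ≡ \sum_(s <- L) fgen (x * coeff s w, s) %[mod TT].
Proof.
move=> uL domL; apply/(eqmod_sym TTG)/(eqmod_big_dom TTG) => // s sw.
by rewrite coeff_outdom // mulr0; apply: TT0l.
Qed.

Lemma thetaDr x w w' : theta (x, w + w') ≡ theta (x, w) + theta (x, w') %[mod TT].
Proof.
set L := undup (dom w ++ dom w'); have uL : uniq L by apply: undup_uniq.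
have Lw : {subset dom w <= L} by move=> y yd; rewrite mem_undup mem_cat yd.
have Lw' : {subset dom w' <= L} by move=> y yd; rewrite mem_undup mem_cat yd orbT.
have Lww' : {subset dom (w + w') <= L} by move=> y /domD_subset; rewrite mem_undup.
apply: (eqmod_trans TTG (theta_seq x uL Lww')).
apply: (eqmod_trans TTG _ (eqmodD TTG (eqmod_sym TTG (theta_seq x uL Lw))
  (eqmod_sym TTG (theta_seq x uL Lw')))).
rewrite -big_split -sumrB; apply: (subgroup_sum TTG) => s _.
by rewrite coeffD mulrDr; apply: TTDl.
Qed.

Lemma thetaDl x x' w : theta (x + x', w) ≡ theta (x, w) + theta (x', w) %[mod TT].
Proof.
rewrite /theta /= -big_split -sumrB; apply: (subgroup_sum TTG) => s _.
by rewrite mulrDl; apply: TTDl.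
Qed.

Lemma thetaZ a x w : theta (a * x, w) ≡ theta (x, a *: w) %[mod TT].
Proof.
apply: (eqmod_sym TTG).
apply: (eqmod_trans TTG (theta_seq x (uniq_dom w) (domZ_subset (c := a) (D := w)))).
by apply: (eqmod_eq TTG); apply: eq_bigr => s _; rewrite coeffZ mulrCA mulrA.
Qed.

Lemma thetaB x w w' : theta (x, w - w') ≡ theta (x, w) - theta (x, w') %[mod TT].
Proof.
by have := thetaDr x (w - w') w'; rewrite subrK => /eqmod_subl /(eqmod_sym TTG).
Qed.

Lemma theta_ds x s : theta (x, ds s) = fgen (x, s).
Proof. by rewrite /theta /= /dsym domU1 big_seq1 coeffU eqxx mul1r mulr1. Qed.

Lemma theta_Omega n : Om n -> forall x, J x -> K (theta (x, n)).
Proof.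
move: n; apply: (@lspan_ind _ _ _ (fun n => forall x, J x -> K (theta (x, n))))
  => [x _|u v Ku Kv x Jx|a u Xu x Jx].
- by rewrite /theta /= dom0 big_nil; apply: (subgroup0 KG).
- apply: (eqmod_mem KG (b := theta (x, u) + theta (x, v))); first by apply: K_TT; apply: thetaDr.
  exact: (subgroupD KG (Ku _ Jx) (Kv _ Jx)).
apply: (eqmod_mem KG (b := theta (a * x, u))).
  by apply: K_TT; apply: (eqmod_sym TTG); apply: thetaZ.
move: (a * x) (idealM idealJ a Jx) => y Jy.
have thetaB3 w1 w2 w3 :
    theta (y, w1 - w2 - w3) ≡ theta (y, w1) - theta (y, w2) - theta (y, w3) %[mod TT].
  apply: (eqmod_trans TTG (thetaB _ _ _)); apply: (eqmodB TTG (thetaB _ _ _)).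
  exact: (eqmod_eq TTG).
case: Xu => [[s [t ->]]|[[s [t ->]]|[s [[c ->] ->]]]].
- apply: K_TT; apply: (eqmod_mem TTG (thetaB3 _ _ _)).
  by rewrite !theta_ds -addrA -opprD; apply: TTDr.
- have thetaZds s1 s2 : theta (y, s1 *: ds s2) ≡ fgen (s1 * y, s2) %[mod TT].
    by rewrite -theta_ds; apply: (eqmod_sym TTG); apply: thetaZ.
  apply: (eqmod_mem KG (b := fgen (y, s * t) - fgen (s * y, t) - fgen (t * y, s))).
    apply: K_TT; apply: (eqmod_trans TTG (thetaB3 _ _ _)); rewrite theta_ds.
    exact: (eqmodB TTG (eqmodB TTG (eqmod_eq TTG erefl) (thetaZds s t)) (thetaZds t s)).
  have -> : fgen (y, s * t) - fgen (s * y, t) - fgen (t * y, s) =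
      - (fgen (y * s, t) - fgen (y, s * t) + fgen (t * y, s)).
    by rewrite opprD opprB [y * s]mulrC.
  apply: (subgroupN KG).
  by apply: K_boundary; left.
- by rewrite theta_ds; case: Jy => a' [Ia' ->]; apply: K_image; left.
Qed.

Lemma theta_Tr t : Tr t -> K (fgext theta t).
Proof.
apply: (zspan_additive (h := fgext theta) KG) => _
  [[v [v' [w [_ _ _ ->]]]]|[[v [w [w' [_ _ _ ->]]]]|
   [[a [v [w [_ _ ->]]]]|[[n [w [_ [] _ _]]]|[v [n [Jv _ On ->]]]]]]].
- by rewrite !raddfB /= !fgext_fgen -addrA -opprD; apply: K_TT; apply: thetaDl.
- by rewrite !raddfB /= !fgext_fgen -addrA -opprD; apply: K_TT; apply: thetaDr.
- by rewrite raddfB /= !fgext_fgen; apply: K_TT; apply: thetaZ.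
- by rewrite /= fgext_fgen; apply: theta_Omega.
Qed.

Lemma theta_tag_phi d : tagged_valid J d -> fgext theta (tag_phi d) ≡ tag_incl d %[mod K].
Proof.
move=> Jd; rewrite /tag_phi (fgext_comp (fgext theta)) /tag_incl fgextB.
apply: (fgext_in KG) => -[b [x r]] xd; have /= Jg := Jd _ xd.
case: b {xd} Jg => /= Jg.
  by rewrite fgext_fgen theta_ds subrr; apply: (subgroup0 KG).
rewrite raddfN /= fgext_fgen theta_ds -opprD addrC; apply: (subgroupN KG).
(* [x (x) r + r (x) x] is the boundary of [1 (x) x (x) r] plus [1 (x) xr],
   and [1 (x) xr] comes from [R (x) I]. *)
have -> : fgen (x, r) + fgen (r, x) =
    fgen (1 * x, r) - fgen (1, x * r) + fgen (r * 1, x) + fgen (1, x * r).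
  by rewrite mul1r mulr1 addrAC subrK.
apply: (subgroupD KG); first by apply: K_boundary; right; right.
case: (idealM idealJ x Jg) => a [Ia ->]; rewrite -(rmorph1 f).
by apply: K_image; right.
Qed.

Lemma tag_phi_injective d : tagged_valid J d -> Tr (tag_phi d) -> K (tag_incl d).
Proof. by move=> Jd /theta_Tr; apply: (eqmod_mem KG (eqmod_sym KG (theta_tag_phi Jd))). Qed.
End HochschildComparison.

Theorem theorem3p6 (k : fieldType) (R S : comAlgType k)
    (f : {lrmorphism R -> S}) (I : R -> Prop) :
  is_ideal I ->
  (forall a b, I a -> I b -> f a = f b -> a = b) ->
  is_ideal (fun s : S => exists a, I a /\ s = f a) ->
  let J : S -> Prop := fun s => exists a, I a /\ s = f a in
  let Rim : S -> Prop := fun s => exists a, s = f a in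
  (* kernel of  S(x)I+I(x)S -> HH_0(R,S,I) = coker(HH_1(R,I) -> HH_1(S,I)) *)
  let K := sum3 (@TT_rel k S) (HHbound J)
                (fun u => exists v, HHcycles I v /\ u = tmap f v) in
  (* relations of I (x)_S Omega_{S/R} *)
  let Trel := tens_rel (V := S^o) (W := {freeg S / S})
                J (fun _ => False) (fun _ => True) (Omega_rel Rim) in
  (* relations of (I/I^2) (x)_{S/I} Omega_{(S/I)/(R/I)} *)
  let Trel2 := tens_rel (V := S^o) (W := {freeg S / S})
                J (ideal_sq J) (fun _ => True) (Omega_quot_rel Rim J) in
  [/\ (* the map is well defined on HH_0(R,S,I) *)
      (forall d, tagged_valid J d -> K (tag_incl d) -> Trel (tag_phi d)),
      (* injective *)
      (forall d, tagged_valid J d -> Trel (tag_phi d) -> K (tag_incl d)),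
      (* surjective *)
      (forall t, gens_in (fun p : S^o * {freeg S / S} => J p.1) t ->
         exists d, tagged_valid J d /\ Trel (tag_phi d - t)),
      (* R-linear *)
      (forall a d, tagged_valid J d ->
         Trel (tag_phi (tag_act (f a) d) - tens_act (f a) (tag_phi d))) &
      (* x (x) dr |-> x (x) dr  induces  I (x)_S Omega_{S/R} ~= (I/I^2) (x) Omega *)
      (forall t, gens_in (fun p : S^o * {freeg S / S} => J p.1) t ->
         (Trel t <-> Trel2 t))].
Proof.
move=> _ _ idealJ J Rim K Trel Trel2.
have J_Rim x : J x -> Rim x by case=> a [_ ->]; exists a.
split.
- exact: tag_phi_well_defined.
- exact: tag_phi_injective.
- exact: tag_phi_surjective.
- by move=> a d; apply: tag_phi_act; last exists a.
- by move=> t _; apply: tens_rel_ideal_quot.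
Qed.
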